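(* In the setting described in the context, let $g\in\mathcal{G}$ and let $\mathcal{Y}$ and $\widetilde{\mathcal{Y}}$ be two representative sets, with functions $A,\widetilde{A}$ and projectors $P,\widetilde{P}$ respectively, such that $\int A\circ g\,d\mu<\infty$ and $\int \widetilde{A}\circ g\,d\mu<\infty$. Define $\nu=P_\sharp\mu_A$, $g_\star\nu=P_\sharp\big((g_\sharp\mu)_A\big)$, $\widetilde{\nu}=\widetilde{P}_\sharp\mu_{\widetilde{A}}$ and $g_\star\widetilde{\nu}=\widetilde{P}_\sharp\big((g_\sharp\mu)_{\widetilde{A}}\big)$. If $g_\star\nu=\nu$, then $g_\star\widetilde{\nu}=\widetilde{\nu}$.
   Context: Let $(\mathcal{X},\Sigma)$ be a measurable space. A flow on $\mathcal{X}$ is a family $(\Phi^t)_{t\in\mathbb{R}}$ of bijective measurable maps with $\Phi^{t_1}\circ\Phi^{t_2}=\Phi^{t_1+t_2}$, $(x,t)\mapsto\Phi^t(x)$ measurable. $f_\sharp\rho=\rho\circ f^{-1}$ is push-forward; $\rho$ is invariant if $\Phi^t_\sharp\rho=\rho$ for all $t$. Fix a flow $\Phi^t$ and an invariant probability measure $\mu$ on $\mathcal{X}$. Let $h^a$, $a>0$, be bijective measurable maps of $\mathcal{X}$ and $\mathcal{G}$ a group (under composition) of bijective measurable maps of $\mathcal{X}$ such that for all $a,a_1,a_2>0$, $t$, $g\in\mathcal{G}$: $h^{a_1}\circ h^{a_2}=h^{a_1a_2}$, $\Phi^t\circ g=g\circ\Phi^t$, $g\circ h^a=h^a\circ g$,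 $\Phi^t\circ h^a=h^a\circ\Phi^{t/a}$. A set $\mathcal{Y}\subset\mathcal{X}$ is a representative set if for every $x$ there is a unique $a=A(x)>0$ with $h^a(x)\in\mathcal{Y}$, with $A:\mathcal{X}\to(0,\infty)$ measurable and $\int A\,d\mu<\infty$; its projector is $P(x)=h^{A(x)}(x)$. For a measure $\rho$ and positive measurable $B$ with $0<\int B\,d\rho<\infty$, $\rho_B$ is the probability measure with $d\rho_B/d\rho=B/\int B\,d\rho$. The measure $\nu$ is the invariant measure of the normalized flow $P\circ\Phi^\tau_A$ on $\mathcal{Y}$, and $g_\star\nu$ is the analogous normalized measure obtained from the invariant measure $g_\sharp\mu$. *)

From HB Require Import structures.
From mathcomp Require Import all_boot all_order all_algebra.
From mathcomp Require Import all_classical all_reals all_analysis.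
Set Implicit Arguments. Unset Strict Implicit. Unset Printing Implicit Defensive.
Import Order.TTheory GRing.Theory Num.Theory.
Local Open Scope classical_set_scope.
Local Open Scope ring_scope.

Section Defs.
Context (d : measure_display) (T : measurableType d) (R : realType).

Definition is_flow (Phi : R -> T -> T) : Prop :=
  (forall t, bijective (Phi t) /\ measurable_fun setT (Phi t)) /\
  (forall t1 t2, Phi t1 \o Phi t2 = Phi (t1 + t2)) /\
  measurable_fun setT (fun p : T * R => Phi p.2 p.1).

Definition flow_invariant (Phi : R -> T -> T) (rho : set T -> \bar R) : Prop :=
  forall t (S : set T), measurable S -> pushforward rho (Phi t) S = rho S.

Definition is_map_group (G : set (T -> T)) : Prop :=
  (forall g, G g -> bijective g /\ measurable_fun setT g) /\
  G id /\
  (forall g1 g2, G g1 -> G g2 -> G (g1 \o g2)) /\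
  (forall g, G g -> exists g', [/\ G g', cancel g g' & cancel g' g]).

Definition representative_set (h : R -> T -> T) (mu : set T -> \bar R)
    (Y : set T) (A : T -> R) : Prop :=
  [/\ measurable_fun setT A,
      (forall x, 0 < A x),
      (forall x, Y (h (A x) x)),
      (forall x a, 0 < a -> Y (h a x) -> a = A x) &
      (\int[mu]_x (A x)%:E < +oo)%E].

Definition projector (h : R -> T -> T) (A : T -> R) : T -> T :=
  fun x => h (A x) x.

Definition normalized (rho : set T -> \bar R) (B : T -> R) : set T -> \bar R :=
  fun S => ((\int[rho]_(x in S) (B x)%:E) *
            ((fine (\int[rho]_x (B x)%:E))^-1)%:E)%E.

End Defs.

From HB Require Import structures.
From mathcomp Require Import all_boot all_order all_algebra.
From mathcomp Require Import all_classical all_reals all_analysis.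
From mathcomp Require Import measurable_realfun.
Import Order.TTheory GRing.Theory Num.Theory.
Local Open Scope classical_set_scope.
Local Open Scope ring_scope.

Set Implicit Arguments. Unset Strict Implicit. Unset Printing Implicit Defensive.

(* Since [h] is multiplicative, the projectors satisfy [Pt (P x) = Pt x] and
   [At (P x) * A x = At x].  Hence for every measure [m] the integral of [At]
   over [Pt @^-1` B] is the integral of [At] over the same set against
   [P_# (A m)], the unnormalized version of [nu].  The hypothesis [g_* nu = nu]
   says that [P_# (A (g_# mu))] is a positive multiple of [P_# (A mu)]; the same
   multiple then relates the integrals of [At] against [g_# mu] and [mu] over
   every [Pt @^-1` B], and it cancels after normalization. *)

Section density_measure.
Local Open Scope ereal_scope.
Context d (T : measurableType d) (R : realType) (m : {measure set T -> \bar R}).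
Variable f : T -> R.
Hypotheses (mf : measurable_fun setT f) (f0 : forall x, (0 <= f x)%R).

Definition density_measure (A : set T) := \int[m]_(x in A) (f x)%:E.

Let density_measure0 : density_measure set0 = 0.
Proof. exact: integral_set0. Qed.

Let density_measure_ge0 A : 0 <= density_measure A.
Proof. by apply: integral_ge0 => x _; rewrite lee_fin. Qed.

Let density_measure_sigma_additive : semi_sigma_additive density_measure.
Proof.
apply: semi_sigma_additive_nng_induced; first exact/measurable_EFinP.
by move=> x; rewrite lee_fin.
Qed.

HB.instance Definition _ := isMeasure.Build _ _ _ density_measure
  density_measure0 density_measure_ge0 density_measure_sigma_additive.

Lemma integral_density_indic (D A : set T) : measurable D -> measurable A ->
  \int[density_measure]_(x in D) (\1_A x)%:E =
  \int[m]_(x in D) ((\1_A x)%:E * (f x)%:E).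
Proof.
move=> mD mA; rewrite integral_indic//= /density_measure setIC integral_mkcondr.
by rewrite epatch_indic; apply: eq_integral => x _; rewrite muleC.
Qed.

Import HBNNSimple.

Lemma integral_density_nnsfun (D : set T) (s : {nnsfun T >-> R}) :
  measurable D ->
  \int[density_measure]_(x in D) (s x)%:E =
  \int[m]_(x in D) ((s x)%:E * (f x)%:E).
Proof.
move=> mD.
have s_ge0 r x : 0 <= (r * \1_(s @^-1` [set r]) x)%:E.
  by rewrite EFinM; exact: nnfun_muleindic_ge0.
have sE x : (s x)%:E = \sum_(r \in range s) (r * \1_(s @^-1` [set r]) x)%:E.
  by rewrite fsumEFin// -fimfunE.
under eq_integral do rewrite sE ge0_mule_fsuml//.
under [LHS]eq_integral do rewrite sE.
rewrite !ge0_integral_fsum//; last 3 first.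
- move=> r; apply: emeasurable_funM.
    exact/measurable_EFinP/measurable_funM.
  exact/measurable_funTS/measurable_EFinP.
- by move=> r x _; rewrite mule_ge0// lee_fin.
- by move=> r; exact/measurable_EFinP/measurable_funM.
apply: eq_fsbigr => r rs.
rewrite integralZl_indic_nnsfun// integral_density_indic//.
under [RHS]eq_integral do rewrite EFinM -muleA.
rewrite ge0_integralZl//.
- apply: emeasurable_funM; first exact/measurable_EFinP.
  exact/measurable_funTS/measurable_EFinP.
- by move=> x _; rewrite mule_ge0// lee_fin.
- by move: rs; rewrite inE => -[x _ <-]; rewrite lee_fin.
Qed.

Lemma integral_density (D : set T) (F : T -> \bar R) : measurable D ->
  measurable_fun D F -> (forall x, D x -> 0 <= F x) ->
  \int[density_measure]_(x in D) F x = \int[m]_(x in D) (F x * (f x)%:E).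
Proof.
move=> mD mF F0; pose F_ := nnsfun_approx mD mF.
have F_F x : D x -> (F_ n x)%:E @[n --> \oo] --> F x.
  by move=> Dx; apply: cvg_nnsfun_approx.
have mF_ n : measurable_fun D (fun x => (F_ n x)%:E).
  exact/measurable_funTS/measurable_EFinP.
have nd_F_ x : {homo (fun n => F_ n x) : n k / (n <= k)%N >-> (n <= k)%R}.
  by move=> n k nk; exact/lefP/nd_nnsfun_approx.
transitivity (limn (fun n => \int[density_measure]_(x in D) (F_ n x)%:E)).
  rewrite -monotone_convergence//.
  - apply: eq_integral => x /[!inE] Dx; apply/esym/cvg_lim => //.
    exact: F_F.
  - by move=> n x _; rewrite lee_fin.
  - by move=> x _ n k nk; rewrite lee_fin; exact: nd_F_.
under eq_fun do rewrite integral_density_nnsfun//.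
rewrite -monotone_convergence//.
- apply: eq_integral => x /[!inE] Dx; apply/cvg_lim => //.
  by apply: cvgeZr => //; exact: F_F.
- move=> n; apply: emeasurable_funM => //.
  exact/measurable_funTS/measurable_EFinP.
- by move=> n x _; rewrite mule_ge0// lee_fin.
- by move=> x _ n k nk; rewrite lee_wpmul2r ?lee_fin//; exact: nd_F_.
Qed.

End density_measure.

Lemma integral_gt0 d (T : measurableType d) (R : realType)
    (m : {measure set T -> \bar R}) (f : T -> R) :
  measurable_fun setT f -> (forall x, 0 < f x) -> m setT != 0%E ->
  (0 < \int[m]_x (f x)%:E)%E.
Proof.
move=> mf f_gt0 m0.
have mfE : measurable_fun setT (EFin \o f) by exact/measurable_EFinP.
rewrite lt_neqAle integral_ge0 ?andbT; last by move=> x _; rewrite lee_fin ltW.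
apply: contra m0 => /eqP f0; rewrite eq_le measure_ge0 andbT.
have : (\int[m]_x `|(EFin \o f) x| = 0)%E.
  by rewrite f0; apply: eq_integral => x _ /=; rewrite gtr0_norm.
move/(ae_eq_integral_abs m measurableT mfE) => [N [mN N0 fN]].
rewrite -N0 le_measure ?inE// => x _; apply: fN => /(_ I) /eqP.
by rewrite eqe gt_eqF.
Qed.

Section normalized.
Local Open Scope ereal_scope.
Context d (T : measurableType d) (R : realType).
Implicit Types (rho : set T -> \bar R) (B : T -> R) (S : set T).

Lemma normalized_eq_scale rho1 rho2 B S :
  fine (\int[rho1]_x (B x)%:E) != 0%R ->
  normalized rho1 B S = normalized rho2 B S ->
  \int[rho1]_(x in S) (B x)%:E =
  (fine (\int[rho1]_x (B x)%:E) / fine (\int[rho2]_x (B x)%:E))%:E *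
  \int[rho2]_(x in S) (B x)%:E.
Proof.
rewrite /normalized; set c1 := fine _; set c2 := fine _ => c1_neq0 E.
transitivity (\int[rho1]_(x in S) (B x)%:E * (c1^-1)%:E * c1%:E).
  by rewrite -muleA -EFinM mulVf// mule1.
by rewrite E -muleA -EFinM muleC mulrC.
Qed.

Lemma eq_normalized_scale rho1 rho2 B (k : R) S : k != 0%R ->
  \int[rho2]_x (B x)%:E \is a fin_num ->
  \int[rho1]_(x in S) (B x)%:E = k%:E * \int[rho2]_(x in S) (B x)%:E ->
  \int[rho1]_x (B x)%:E = k%:E * \int[rho2]_x (B x)%:E ->
  normalized rho1 B S = normalized rho2 B S.
Proof.
move=> k_neq0 fin_int E ET; rewrite /normalized E ET -(fineK fin_int) -EFinM /=.
by rewrite muleAC -EFinM invfM mulrA mulfV// mul1r muleC.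
Qed.

End normalized.

Section projector.
Context d (T : measurableType d) (R : realType) (h : R -> T -> T).
Hypothesis h_mul : forall a1 a2, 0 < a1 -> 0 < a2 -> h a1 \o h a2 = h (a1 * a2).
Variables (mu : set T -> \bar R) (A At : T -> R) (Yt : set T).
Hypotheses (A_gt0 : forall x, 0 < A x) (HYt : representative_set h mu Yt At).

Let At_gt0 x : 0 < At x. Proof. by case: HYt. Qed.

Lemma representative_fun_projector x : At (projector h A x) * A x = At x.
Proof.
have [_ _ Yt_At At_uniq _] := HYt.
apply: At_uniq; first exact: mulr_gt0.
by rewrite -h_mul//; exact: Yt_At.
Qed.

Lemma projector_projector x :
  projector h At (projector h A x) = projector h At x.
Proof.
rewrite [LHS]/projector -[h _ (h _ x)]/((h _ \o h _) x) h_mul//.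
by rewrite representative_fun_projector.
Qed.

Hypotheses (mA : measurable_fun setT A) (mAt : measurable_fun setT At).
Hypotheses (mP : measurable_fun setT (projector h A))
  (mPt : measurable_fun setT (projector h At)).

Let A_ge0 x : 0 <= A x. Proof. exact: ltW. Qed.

Let At_ge0 x : (0 <= (At x)%:E)%E. Proof. by rewrite lee_fin ltW. Qed.

Let measurable_preimage_projector B :
  measurable B -> measurable (projector h At @^-1` B).
Proof. by move=> mB; rewrite -[X in measurable X]setTI; exact: mPt. Qed.

Lemma integral_preimage_projector (m : {measure set T -> \bar R}) (B : set T) :
  measurable B ->
  (\int[m]_(x in projector h At @^-1` B) (At x)%:E =
   \int[pushforward (density_measure m A) (projector h A)]_(y in
     projector h At @^-1` B) (At y)%:E)%E.
Proof.
move=> mB; have mPtB := measurable_preimage_projector mB.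
rewrite [RHS]ge0_integral_pushforward//; last first.
  exact/measurable_funTS/measurable_EFinP.
have -> : projector h A @^-1` (projector h At @^-1` B) = projector h At @^-1` B.
  by apply/seteqP; split => x; rewrite /preimage/= projector_projector.
rewrite integral_density//; last 2 first.
- by apply/measurable_funTS/measurableT_comp => //; exact/measurable_EFinP.
- by move=> x _; exact: At_ge0.
by apply: eq_integral => x _; rewrite -EFinM representative_fun_projector.
Qed.

Lemma integral_preimage_projector_scale (m1 m2 : {measure set T -> \bar R})
    (k : {nonneg R}) :
  (forall B, measurable B ->
    \int[m1]_(x in projector h A @^-1` B) (A x)%:E =
    k%:num%:E * \int[m2]_(x in projector h A @^-1` B) (A x)%:E)%E ->
  forall B, measurable B ->
    (\int[m1]_(x in projector h At @^-1` B) (At x)%:E =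
     k%:num%:E * \int[m2]_(x in projector h At @^-1` B) (At x)%:E)%E.
Proof.
move=> scaleA B mB.
rewrite (integral_preimage_projector m1)// (integral_preimage_projector m2)//.
rewrite -ge0_integral_mscale//; last 2 first.
- exact: measurable_preimage_projector.
- exact/measurable_funTS/measurable_EFinP.
by apply: eq_measure_integral => C mC _; exact: scaleA.
Qed.

End projector.

Unset Implicit Arguments.

Theorem theorem3 (d : measure_display) (T : measurableType d) (R : realType)
  (Phi : R -> T -> T) (mu : probability T R)
  (h : R -> T -> T) (G : set (T -> T))
  (Hflow : is_flow Phi)
  (Hinv : flow_invariant Phi mu)
  (Hh_bij : forall a, 0 < a -> bijective (h a) /\ measurable_fun setT (h a))
  (Hh_mul : forall a1 a2, 0 < a1 -> 0 < a2 -> h a1 \o h a2 = h (a1 * a2))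
  (HG : is_map_group G)
  (HPhiG : forall t g, G g -> Phi t \o g = g \o Phi t)
  (HhG : forall a g, 0 < a -> G g -> g \o h a = h a \o g)
  (HPhih : forall t a, 0 < a -> Phi t \o h a = h a \o Phi (t / a))
  (g : T -> T) (Hg : G g)
  (Y Yt : set T) (A At : T -> R)
  (HY : representative_set h mu Y A)
  (HYt : representative_set h mu Yt At)
  (mP : measurable_fun setT (projector h A))
  (mPt : measurable_fun setT (projector h At))
  (HAg : (\int[mu]_x (A (g x))%:E < +oo)%E)
  (HAtg : (\int[mu]_x (At (g x))%:E < +oo)%E) :
  (forall S : set T, measurable S ->
     pushforward (normalized (pushforward mu g) A) (projector h A) S =
     pushforward (normalized mu A) (projector h A) S) ->
  (forall S : set T, measurable S ->
     pushforward (normalized (pushforward mu g) At) (projector h At) S =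
     pushforward (normalized mu At) (projector h At) S).
Proof.
move=> gnu_nu S mS.
have [_ mg] := HG.1 g Hg.
have [mA A_gt0 _ _ int_A] := HY; have [mAt At_gt0 _ _ int_At] := HYt.
have mu_gT : pushforward mu g setT = 1%E.
  by rewrite /pushforward preimage_setT probability_setT.
have int_gA : (\int[pushforward mu g]_x (A x)%:E < +oo)%E.
  rewrite ge0_integral_pushforward//; first exact/measurable_EFinP.
  by move=> x _; rewrite lee_fin ltW.
have fine_int_gt0 (m : {measure set T -> \bar R}) : m setT = 1%E ->
    (\int[m]_x (A x)%:E < +oo)%E -> 0 < fine (\int[m]_x (A x)%:E).
  move=> m1 int_lt; apply: fine_gt0; rewrite int_lt andbT.
  by apply: integral_gt0; rewrite // m1 oner_neq0.
(* [pushforward mu g] is a measure only through [mg], which type inference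
   finds in the context: hence the explicit statements below. *)
have c1_gt0 : 0 < fine (\int[pushforward mu g]_x (A x)%:E).
  exact: fine_int_gt0.
have c2_gt0 := fine_int_gt0 _ (probability_setT mu) int_A.
pose k := NngNum (ltW (divr_gt0 c1_gt0 c2_gt0)).
have scale_At : forall B, measurable B ->
    (\int[pushforward mu g]_(x in projector h At @^-1` B) (At x)%:E =
     k%:num%:E * \int[mu]_(x in projector h At @^-1` B) (At x)%:E)%E.
  apply: (integral_preimage_projector_scale Hh_mul A_gt0 HYt mA mAt mP mPt).
  move=> B mB.
  exact: normalized_eq_scale (lt0r_neq0 c1_gt0) (gnu_nu B mB).
apply: eq_normalized_scale (scale_At S mS) _.
- by rewrite gt_eqF// divr_gt0.
- by rewrite ge0_fin_numE// integral_ge0// => x _; rewrite lee_fin ltW.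
- by have := scale_At setT measurableT; rewrite preimage_setT.
Qed.
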